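(* Let $n\ge2$. The word $K_n$ has exactly $2\cdot4^{n-2}-1$ letters, and its letter in position $j$ ($1\le j\le 2\cdot 4^{n-2}-1$) is: (a) $P$ exactly when $j=2k-1$, $k=1,\dots,4^{n-2}$; (b) $T$ exactly when $j=4^{2l-1}(2k-1)$ with $l=1,\dots,\lfloor\frac{n-1}{2}\rfloor$, $k=1,\dots,4^{\,n-2l-1}$; (c) $V$ exactly when $j=4^{2l}(2k-1)$ with $l=1,\dots,\lfloor\frac{n-2}{2}\rfloor$, $k=1,\dots,4^{\,n-2l-2}$; (d) $S$ exactly when $j=4^{2l-2}(8k-6)$ with $l=1,\dots,\lfloor\frac{n-1}{2}\rfloor$, $k=1,\dots,4^{\,n-2l-1}$, or $j=4^{2l-1}(8k-2)$ with $l=1,\dots,\lfloor\frac{n-2}{2}\rfloor$, $k=1,\dots,4^{\,n-2l-2}$; (e) $U$ exactly when $j=4^{2l-2}(8k-2)$ with $l=1,\dots,\lfloor\frac{n-1}{2}\rfloor$, $k=1,\dots,4^{\,n-2l-1}$, or $j=4^{2l-1}(8k-6)$ with $l=1,\dots,\lfloor\frac{n-2}{2}\rfloor$, $k=1,\dots,4^{\,n-2l-2}$. Moreover, if $n=2m$ then $K_n$ contains $4^{2m-2}$ letters $P$, $\frac{4^{2m-2}-1}{15}$ letters $V$, $\frac{4^{2m-1}-4}{15}$ letters $T$, $\frac{4^{2m-2}-1}{3}$ letters $S$ and $\frac{4^{2m-2}-1}{3}$ letters $U$; if $n=2m+1$ then it contains $4^{2m-1}$ letters $P$, $\frac{4^{2m-1}-4}{15}$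 letters $V$, $\frac{4^{2m}-1}{15}$ letters $T$, $\frac{4^{2m-1}-1}{3}$ letters $S$ and $\frac{4^{2m-1}-1}{3}$ letters $U$.
   Context: Words $K_n$ ($n\ge2$) over the alphabet $\{P,S,T,U,V\}$ are defined by $K_2=P$; $K_{2m+1}=K_{2m}\,S\,K_{2m}\,T\,K_{2m}\,U\,K_{2m}$ for $m\ge1$; $K_{2m}=K_{2m-1}\,U\,K_{2m-1}\,V\,K_{2m-1}\,S\,K_{2m-1}$ for $m\ge2$ (juxtaposition is concatenation; e.g. $K_3=PSPTPUP$). (In the paper these letters encode blocks of affine curvatures of the Hilbert curve: $P=(-2,1,\tfrac12,-1,1,-1,2,1,-\tfrac12)$, $S=(2,1,-\tfrac12,1)$, $T=(3,1,\tfrac13)$, $U=(1,-2,1,\tfrac12)$, $V=(1,-1,1,-1,1)$, and the curvature sequence of the Hilbert curve at step $n$ is $1,K_n,1$.) $\lfloor x\rfloor$ denotes the greatest integer $\le x$. *)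

From HB Require Import structures.
From mathcomp Require Import all_boot.
Set Implicit Arguments. Unset Strict Implicit. Unset Printing Implicit Defensive.

Inductive letter := LP | LS | LT | LU | LV.

Definition letter_eqb (a b : letter) : bool :=
  match a, b with
  | LP, LP | LS, LS | LT, LT | LU, LU | LV, LV => true
  | _, _ => false
  end.

Lemma letter_eqP : Equality.axiom letter_eqb.
Proof. by case; case; constructor. Qed.

HB.instance Definition _ := hasDecEq.Build letter letter_eqP.

(* K n for n >= 2 (values for n < 2 are irrelevant junk):
   K 2 = P; K (2m+1) = K(2m) S K(2m) T K(2m) U K(2m);
   K (2m) = K(2m-1) U K(2m-1) V K(2m-1) S K(2m-1). *)
Fixpoint K (n : nat) : seq letter :=
  match n with
  | 0 | 1 | 2 => [:: LP]
  | n'.+1 =>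
      let w := K n' in
      if odd n'.+1 then w ++ LS :: w ++ LT :: w ++ LU :: w
      else w ++ LU :: w ++ LV :: w ++ LS :: w
  end.

(* letter of K n at 1-based position j *)
Definition letter_at (n j : nat) : letter := nth LP (K n) j.-1.

From HB Require Import structures.
From mathcomp Require Import all_boot zify.

Set Implicit Arguments.
Unset Strict Implicit.
Unset Printing Implicit Defensive.

(* Write a position as j = 2^v * o with o odd.  K_(p+3) is four copies of K_(p+2)
   separated by the letters at positions 2^e, 2^(e+1) and 3 * 2^e, e = 2p + 1, and
   a position inside a copy differs from the corresponding position in K_(p+2) by a
   multiple of 2^e.  Such a shift keeps v and, when v is odd, also o mod 4, because
   e is odd and hence e - v >= 2.  By induction the letter at 2^v * o depends only
   on v and o mod 4, and the five position sets of the theorem are these conditions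
   on v and o mod 4 rewritten in base 4.  The letter counts follow from the
   four-copies recursion by induction. *)

(* The letter of every K_n at position 2^v * o, o odd. *)
Definition Kletter (v o : nat) : letter :=
  if v == 0 then LP else
  match v %% 4 with
  | 0 => LV
  | 2 => LT
  | _ => if (v %% 4 == 1) == (o %% 4 == 1) then LS else LU
  end.

Lemma Kletter_LP v o : Kletter v o = LP <-> v = 0.
Proof.
rewrite /Kletter; case: eqP => // v_neq0; split=> [|//].
by case: (v %% 4) => [|[|[|r]]] //; case: ifP.
Qed.

Lemma Kletter_LT v o : Kletter v o = LT <-> v %% 4 = 2.
Proof.
rewrite /Kletter; case: eqP => [->|_] //.
have : v %% 4 < 4 by rewrite ltn_mod.
by case: (v %% 4) => [|[|[|[|r]]]] //= _; case: ifP.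
Qed.

Lemma Kletter_LV v o : Kletter v o = LV <-> 0 < v /\ v %% 4 = 0.
Proof.
rewrite /Kletter; case: eqP => [->|v_neq0]; first by split=> // -[].
have : v %% 4 < 4 by rewrite ltn_mod.
by case: (v %% 4) => [|[|[|[|r]]]] //= _; try case: ifP; split=> // *; lia.
Qed.

Lemma Kletter_LS v o : odd o -> Kletter v o = LS <->
  (v %% 4 = 1 /\ o %% 4 = 1) \/ (v %% 4 = 3 /\ o %% 4 = 3).
Proof.
move=> o_odd; rewrite /Kletter; case: eqP => [->|v_neq0]; first by split=> // -[] [].
have : v %% 4 < 4 by rewrite ltn_mod.
case: (v %% 4) => [|[|[|[|r]]]] //= _; try case: ifP => /eqP; split=> //; lia.
Qed.

Lemma Kletter_LU v o : odd o -> Kletter v o = LU <->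
  (v %% 4 = 1 /\ o %% 4 = 3) \/ (v %% 4 = 3 /\ o %% 4 = 1).
Proof.
move=> o_odd; rewrite /Kletter; case: eqP => [->|v_neq0]; first by split=> // -[] [].
have : v %% 4 < 4 by rewrite ltn_mod.
case: (v %% 4) => [|[|[|[|r]]]] //= _; try case: ifP => /eqP; split=> //; lia.
Qed.

Lemma Kletter_add_mulpow2 v o q t : (odd v -> 1 < t) ->
  Kletter v (o + q * 2 ^ t) = Kletter v o.
Proof.
move=> t_gt1; rewrite /Kletter; case: (boolP (odd v)) => [v_odd | v_even].
  have -> : 2 ^ t = 4 * 2 ^ (t - 2) by rewrite -[4]/(2 ^ 2) -expnD subnKC ?t_gt1.
  by rewrite mulnCA [4 * _]mulnC addnC modnMDl.
have : v %% 4 = 0 \/ v %% 4 = 2 by lia.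
by case=> ->.
Qed.

Lemma pow2_odd_inj v v' o o' : odd o -> odd o' ->
  2 ^ v * o = 2 ^ v' * o' -> v = v' /\ o = o'.
Proof.
elim: v v' => [|v IHv] [|v'] o_odd o'_odd; rewrite ?mul1n.
- by [].
- by move=> eq_o; move: o_odd; rewrite eq_o oddM oddX.
- by move=> eq_o; move: o'_odd; rewrite -eq_o oddM oddX.
- rewrite !expnS -!mulnA => /eqP; rewrite eqn_pmul2l // => /eqP.
  by case/IHv=> // -> ->.
Qed.

Lemma pow2_odd_exists j : 0 < j -> exists v o, odd o /\ j = 2 ^ v * o.
Proof.
elim/ltn_ind: j => j IHj j_gt0.
case j_odd: (odd j); first by exists 0, j; rewrite mul1n.
have [v [o [o_odd half_j]]] : exists v o, odd o /\ j./2 = 2 ^ v * o.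
  by apply: IHj; lia.
by exists v.+1, o; rewrite expnS -mulnA -half_j; lia.
Qed.

Lemma pow2_odd_ltn v o e : 0 < o -> 2 ^ v * o < 2 ^ e -> v < e /\ o < 2 ^ (e - v).
Proof.
move=> o_gt0 j_lt; have v_lt_e : v < e.
  rewrite -(ltn_exp2l _ _ (ltnSn 1)); apply: leq_ltn_trans j_lt.
  by rewrite leq_pmulr.
split=> //; rewrite -(ltn_pmul2l (expn_gt0 2 v)) -expnD subnKC //.
exact: ltnW.
Qed.

Lemma modn_pow2_odd v o e : 0 < (2 ^ v * o) %% 2 ^ e ->
  v < e /\ (2 ^ v * o) %% 2 ^ e = 2 ^ v * (o %% 2 ^ (e - v)).
Proof.
move=> r_gt0; have v_lt_e : v < e.
  rewrite ltnNge; apply: contraTN r_gt0 => e_le_v.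
  by rewrite -leqNgt leqn0; apply/dvdn_mulr/dvdn_exp2l.
by split=> //; rewrite muln_modr -expnD subnKC // ltnW.
Qed.

Definition quad {T : Type} (w : seq T) (a b c : T) := w ++ a :: w ++ b :: w ++ c :: w.

Section Quad.
Variables (T : Type) (x0 : T) (w : seq T) (a b c : T).

Lemma size_quad : size (quad w a b c) = 4 * size w + 3.
Proof. rewrite /quad; do 3 rewrite size_cat /=; lia. Qed.

Lemma count_quad (P : pred T) :
  count P (quad w a b c) = 4 * count P w + P a + P b + P c.
Proof. rewrite /quad; do 3 rewrite count_cat /=; lia. Qed.

Lemma nth_cat_cons_size (x : T) s : nth x0 (w ++ x :: s) (size w) = x.
Proof. by rewrite nth_cat ltnn subnn. Qed.

Lemma nth_cat_cons_shift (x : T) s k :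
  nth x0 (w ++ x :: s) ((size w).+1 + k) = nth x0 s k.
Proof. by rewrite nth_cat ifF ?addSnnS ?addKn //; lia. Qed.

Lemma nth_quad_block q i : q < 4 -> i < size w ->
  nth x0 (quad w a b c) (q * (size w).+1 + i) = nth x0 w i.
Proof.
move=> q_lt4 i_lt; rewrite /quad.
case: q q_lt4 => [|[|[|[|q]]]] // _; rewrite ?mulSn mul0n ?add0n ?addn0 -?addnA.
all: by rewrite ?nth_cat_cons_shift ?nth_cat ?i_lt.
Qed.

Lemma nth_quad_sep q : 0 < q < 4 ->
  nth x0 (quad w a b c) (q * (size w).+1 - 1) = nth x0 [:: a; b; c] q.-1.
Proof.
case: q => [|[|[|[|q]]]] // _; rewrite /quad.
- by rewrite mul1n subn1 nth_cat_cons_size.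
- rewrite (_ : 2 * _ - 1 = (size w).+1 + size w); last lia.
  by rewrite nth_cat_cons_shift nth_cat_cons_size.
- rewrite (_ : 3 * _ - 1 = (size w).+1 + ((size w).+1 + size w)); last lia.
  by rewrite !nth_cat_cons_shift nth_cat_cons_size.
Qed.
End Quad.

Lemma K_succ p :
  K p.+3 = if odd p then quad (K p.+2) LU LV LS else quad (K p.+2) LS LT LU.
Proof. by rewrite /= negbK; case: (odd p). Qed.

Lemma K_succ_Kletter p :
  K p.+3 = quad (K p.+2) (Kletter (2 * p + 1) 1) (Kletter (2 * p + 2) 1)
                         (Kletter (2 * p + 1) 3).
Proof.
rewrite K_succ /Kletter !addn_eq0 /= andbF.
have [p_odd|p_even] := boolP (odd p).
  by have [-> ->] : (2 * p + 1) %% 4 = 3 /\ (2 * p + 2) %% 4 = 0 by lia.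
by have [-> ->] : (2 * p + 1) %% 4 = 1 /\ (2 * p + 2) %% 4 = 2 by lia.
Qed.

Lemma size_K p : (size (K p.+2)).+1 = 2 ^ (2 * p + 1).
Proof.
elim: p => [//|p IHp]; rewrite K_succ_Kletter size_quad.
by rewrite (_ : 2 * p.+1 + 1 = (2 * p + 1).+2) ?expnS -?IHp; lia.
Qed.

Lemma count_K p :
  [/\ count_mem LP (K p.+2) = 4 ^ p,
      3 * count_mem LS (K p.+2) + 1 = 4 ^ p,
      3 * count_mem LU (K p.+2) + 1 = 4 ^ p,
      15 * count_mem LV (K p.+2) + (if odd p then 4 else 1) = 4 ^ p
    & 15 * count_mem LT (K p.+2) + (if odd p then 1 else 4) = 4 * 4 ^ p].
Proof.
elim: p => [//|p [cP cS cU cV cT]].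
rewrite K_succ expnS oddS; move: (K p.+2) cP cS cU cV cT => w.
by case: (odd p) => /= cP cS cU cV cT; rewrite !count_quad /=; split; lia.
Qed.

Lemma letter_at_K_succ_sep p q : 0 < q < 4 ->
  letter_at p.+3 (q * 2 ^ (2 * p + 1)) =
  nth LP [:: Kletter (2 * p + 1) 1; Kletter (2 * p + 2) 1; Kletter (2 * p + 1) 3] q.-1.
Proof. by rewrite /letter_at K_succ_Kletter -size_K -subn1; apply: nth_quad_sep. Qed.

Lemma letter_at_K_succ_block p j : 0 < j %% 2 ^ (2 * p + 1) -> j <= size (K p.+3) ->
  letter_at p.+3 j = letter_at p.+2 (j %% 2 ^ (2 * p + 1)).
Proof.
rewrite K_succ_Kletter size_quad -size_K => r_gt0 j_le.
have q_lt4 : j %/ (size (K p.+2)).+1 < 4 by rewrite ltn_divLR //; lia.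
have r_lt : j %% (size (K p.+2)).+1 <= size (K p.+2) by rewrite -ltnS ltn_mod.
rewrite /letter_at K_succ_Kletter {1}(divn_eq j (size (K p.+2)).+1).
rewrite -subn1 -addnBA // nth_quad_block ?subn1 //.
by apply: leq_trans r_lt; rewrite ltn_predL.
Qed.

Lemma letter_at_K p v o : odd o -> 0 < 2 ^ v * o <= size (K p.+2) ->
  letter_at p.+2 (2 ^ v * o) = Kletter v o.
Proof.
elim: p v o => [|p IHp] v o o_odd j_bd.
  have j1 : 2 ^ v * o = 2 ^ 0 * 1 by move: j_bd => /=; lia.
  by have [-> ->] : v = 0 /\ o = 1 by apply: pow2_odd_inj j1.
set e := 2 * p + 1.
have [r0 | r_gt0] := posnP ((2 ^ v * o) %% 2 ^ e).
  have j_eq : 2 ^ v * o = (2 ^ v * o) %/ 2 ^ e * 2 ^ e.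
    by rewrite {1}(divn_eq (2 ^ v * o) (2 ^ e)) r0 addn0.
  set q := _ %/ _ in j_eq; rewrite j_eq in j_bd *.
  have q_bd : 0 < q < 4.
    move: j_bd; rewrite K_succ_Kletter size_quad -size_K muln_gt0.
    case/andP=> /andP[-> _] j_le /=.
    by rewrite -(ltn_pmul2r (ltn0Sn (size (K p.+2)))); lia.
  rewrite letter_at_K_succ_sep //.
  case: q j_eq q_bd {j_bd} => [|[|[|[|q]]]] //.
  - by rewrite mul1n -[2 ^ e]muln1 => /pow2_odd_inj[] // -> ->.
  - rewrite -[2 * _]muln1 -expnS => /pow2_odd_inj[] // -> -> _.
    by rewrite (_ : e.+1 = 2 * p + 2) //; lia.
  - by rewrite [3 * _]mulnC => /pow2_odd_inj[] // -> ->.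
have [v_lt_e r_eq] := modn_pow2_odd r_gt0.
set o' := o %% 2 ^ (e - v) in r_eq.
have o'_odd : odd o' by rewrite odd_mod // oddX subn_eq0 leqNgt v_lt_e.
have -> : Kletter v o = Kletter v o'.
  rewrite {1}(divn_eq o (2 ^ (e - v))) addnC Kletter_add_mulpow2 // => v_odd.
  by rewrite /e in v_lt_e *; lia.
have r_bd : 0 < 2 ^ v * o' <= size (K p.+2).
  by rewrite -r_eq r_gt0 -ltnS size_K -/e ltn_mod expn_gt0.
by case/andP: j_bd => _ j_le; rewrite letter_at_K_succ_block -/e // r_eq IHp.
Qed.

Lemma expn2_double t s : 2 ^ (2 * t + s) = 4 ^ t * 2 ^ s.
Proof. by rewrite expnD expnM. Qed.

Lemma mul_pow4_pow2 a b x : 4 ^ a * (2 ^ b * x) = 2 ^ (2 * a + b) * x.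
Proof. by rewrite mulnA expn2_double. Qed.

Lemma index_of_residue o m d B : 0 < d <= m -> (o + d) %% m = 0 -> o < m * B ->
  exists2 k, 1 <= k <= B & o = m * k - d.
Proof.
move=> d_bd od_mod o_lt; have m_gt0 : 0 < m by lia.
have od_eq := divn_eq (o + d) m; rewrite od_mod addn0 in od_eq.
exists ((o + d) %/ m); last by rewrite mulnC -od_eq addnK.
apply/andP; split.
  by rewrite divn_gt0 //; apply: dvdn_leq; [lia | exact/eqP].
rewrite -ltnS ltn_divLR //; lia.
Qed.

Lemma pow2_odd_eq_pow4 v o a b x : odd o -> odd x ->
  2 ^ v * o = 4 ^ a * (2 ^ b * x) -> v = 2 * a + b /\ o = x.
Proof. by move=> o_odd x_odd; rewrite mul_pow4_pow2 => /pow2_odd_inj; apply. Qed.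

Lemma Kletter_LT_positions n v o : odd o -> 2 ^ v * o < 2 ^ (2 * (n - 2) + 1) ->
  Kletter v o = LT <->
  exists l k, 1 <= l <= (n - 1)./2 /\ 1 <= k <= 4 ^ (n - 2 * l - 1) /\
              2 ^ v * o = 4 ^ (2 * l - 1) * (2 * k - 1).
Proof.
move=> o_odd j_lt; rewrite Kletter_LT; split=> [v_mod | [l [k [l_bd [k_bd j_eq]]]]].
  have [v_lt o_lt] := pow2_odd_ltn (odd_gt0 o_odd) j_lt.
  set l := (v + 2) %/ 4; have v_eq : v = 2 * (2 * l - 1) by lia.
  rewrite (_ : 2 * (n - 2) + 1 - v = 2 * (n - 2 * l - 1) + 1) ?expn2_double in o_lt; last lia.
  have [k k_bd o_eq] := @index_of_residue o 2 1 (4 ^ (n - 2 * l - 1)) isT (ltac:(lia)) (ltac:(lia)).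
  by exists l, k; rewrite v_eq expnM -o_eq; split=> //; lia.
rewrite -[2 * k - 1]mul1n -(expn0 2) in j_eq.
have [|-> _] := pow2_odd_eq_pow4 o_odd _ j_eq; lia.
Qed.

Lemma Kletter_LV_positions n v o : odd o -> 2 ^ v * o < 2 ^ (2 * (n - 2) + 1) ->
  Kletter v o = LV <->
  exists l k, 1 <= l <= (n - 2)./2 /\ 1 <= k <= 4 ^ (n - 2 * l - 2) /\
              2 ^ v * o = 4 ^ (2 * l) * (2 * k - 1).
Proof.
move=> o_odd j_lt; rewrite Kletter_LV; split=> [[v_gt0 v_mod] | [l [k [l_bd [k_bd j_eq]]]]].
  have [v_lt o_lt] := pow2_odd_ltn (odd_gt0 o_odd) j_lt.
  set l := v %/ 4; have v_eq : v = 2 * (2 * l) by lia.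
  rewrite (_ : 2 * (n - 2) + 1 - v = 2 * (n - 2 * l - 2) + 1) ?expn2_double in o_lt; last lia.
  have [k k_bd o_eq] := @index_of_residue o 2 1 (4 ^ (n - 2 * l - 2)) isT (ltac:(lia)) (ltac:(lia)).
  by exists l, k; rewrite v_eq expnM -o_eq; split=> //; lia.
rewrite -[2 * k - 1]mul1n -(expn0 2) in j_eq.
have [|-> _] := pow2_odd_eq_pow4 o_odd _ j_eq; lia.
Qed.

Lemma Kletter_v1_positions n v o d : odd o -> 2 ^ v * o < 2 ^ (2 * (n - 2) + 1) ->
  d < 4 -> odd d -> v %% 4 = 1 -> (o + d) %% 4 = 0 ->
  exists l k, 1 <= l <= (n - 1)./2 /\ 1 <= k <= 4 ^ (n - 2 * l - 1) /\
              2 ^ v * o = 4 ^ (2 * l - 2) * (8 * k - 2 * d).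
Proof.
move=> o_odd j_lt d_lt d_odd v_mod o_mod.
have [v_lt o_lt] := pow2_odd_ltn (odd_gt0 o_odd) j_lt.
set l := (v + 3) %/ 4; have v_eq : v = 2 * (2 * l - 2) + 1 by lia.
rewrite (_ : 2 * (n - 2) + 1 - v = 2 * (n - 2 * l - 1) + 2) ?expn2_double in o_lt; last lia.
have [k k_bd o_eq] := @index_of_residue o 4 d (4 ^ (n - 2 * l - 1)) (ltac:(lia)) o_mod (ltac:(lia)).
exists l, k; rewrite v_eq -mul_pow4_pow2 o_eq; split; first lia.
by split=> //; congr (_ * _); lia.
Qed.

Lemma Kletter_v3_positions n v o d : odd o -> 2 ^ v * o < 2 ^ (2 * (n - 2) + 1) ->
  d < 4 -> odd d -> v %% 4 = 3 -> (o + d) %% 4 = 0 ->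
  exists l k, 1 <= l <= (n - 2)./2 /\ 1 <= k <= 4 ^ (n - 2 * l - 2) /\
              2 ^ v * o = 4 ^ (2 * l - 1) * (8 * k - 2 * d).
Proof.
move=> o_odd j_lt d_lt d_odd v_mod o_mod.
have [v_lt o_lt] := pow2_odd_ltn (odd_gt0 o_odd) j_lt.
set l := (v + 1) %/ 4; have v_eq : v = 2 * (2 * l - 1) + 1 by lia.
rewrite (_ : 2 * (n - 2) + 1 - v = 2 * (n - 2 * l - 2) + 2) ?expn2_double in o_lt; last lia.
have [k k_bd o_eq] := @index_of_residue o 4 d (4 ^ (n - 2 * l - 2)) (ltac:(lia)) o_mod (ltac:(lia)).
exists l, k; rewrite v_eq -mul_pow4_pow2 o_eq; split; first lia.
by split=> //; congr (_ * _); lia.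
Qed.

Lemma Kletter_LS_positions n v o : odd o -> 2 ^ v * o < 2 ^ (2 * (n - 2) + 1) ->
  Kletter v o = LS <->
  (exists l k, 1 <= l <= (n - 1)./2 /\ 1 <= k <= 4 ^ (n - 2 * l - 1) /\
               2 ^ v * o = 4 ^ (2 * l - 2) * (8 * k - 6)) \/
  (exists l k, 1 <= l <= (n - 2)./2 /\ 1 <= k <= 4 ^ (n - 2 * l - 2) /\
               2 ^ v * o = 4 ^ (2 * l - 1) * (8 * k - 2)).
Proof.
move=> o_odd j_lt; rewrite Kletter_LS //.
split=> [[[v_mod o_mod] | [v_mod o_mod]] | [[l [k [l_bd [k_bd j_eq]]]] | [l [k [l_bd [k_bd j_eq]]]]]].
- by left; apply: (@Kletter_v1_positions n v o 3) => //; lia.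
- by right; apply: (@Kletter_v3_positions n v o 1) => //; lia.
- rewrite (_ : 8 * k - 6 = 2 ^ 1 * (4 * k - 3)) in j_eq; last lia.
  have [|-> ->] := pow2_odd_eq_pow4 o_odd _ j_eq; lia.
- rewrite (_ : 8 * k - 2 = 2 ^ 1 * (4 * k - 1)) in j_eq; last lia.
  have [|-> ->] := pow2_odd_eq_pow4 o_odd _ j_eq; lia.
Qed.

Lemma Kletter_LU_positions n v o : odd o -> 2 ^ v * o < 2 ^ (2 * (n - 2) + 1) ->
  Kletter v o = LU <->
  (exists l k, 1 <= l <= (n - 1)./2 /\ 1 <= k <= 4 ^ (n - 2 * l - 1) /\
               2 ^ v * o = 4 ^ (2 * l - 2) * (8 * k - 2)) \/
  (exists l k, 1 <= l <= (n - 2)./2 /\ 1 <= k <= 4 ^ (n - 2 * l - 2) /\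
               2 ^ v * o = 4 ^ (2 * l - 1) * (8 * k - 6)).
Proof.
move=> o_odd j_lt; rewrite Kletter_LU //.
split=> [[[v_mod o_mod] | [v_mod o_mod]] | [[l [k [l_bd [k_bd j_eq]]]] | [l [k [l_bd [k_bd j_eq]]]]]].
- by left; apply: (@Kletter_v1_positions n v o 1) => //; lia.
- by right; apply: (@Kletter_v3_positions n v o 3) => //; lia.
- rewrite (_ : 8 * k - 2 = 2 ^ 1 * (4 * k - 1)) in j_eq; last lia.
  have [|-> ->] := pow2_odd_eq_pow4 o_odd _ j_eq; lia.
- rewrite (_ : 8 * k - 6 = 2 ^ 1 * (4 * k - 3)) in j_eq; last lia.
  have [|-> ->] := pow2_odd_eq_pow4 o_odd _ j_eq; lia.
Qed.

Lemma Kletter_LP_positions n v o : odd o -> 2 ^ v * o < 2 ^ (2 * (n - 2) + 1) ->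
  Kletter v o = LP <-> exists k, 1 <= k <= 4 ^ (n - 2) /\ 2 ^ v * o = 2 * k - 1.
Proof.
move=> o_odd j_lt; rewrite Kletter_LP; split=> [v0 | [k [k_bd j_eq]]].
  rewrite v0 expn2_double expn1 mul1n in j_lt *.
  by exists o./2.+1; lia.
rewrite -[2 * k - 1]mul1n -(expn0 2) in j_eq.
by have [|-> _] := pow2_odd_inj o_odd _ j_eq; first lia.
Qed.

Theorem mainTheorem12 (n : nat) (hn : 2 <= n) :
  size (K n) = 2 * 4 ^ (n - 2) - 1 /\
  (forall j, 1 <= j <= 2 * 4 ^ (n - 2) - 1 ->
    [/\ letter_at n j = LP <->
          (exists k, 1 <= k <= 4 ^ (n - 2) /\ j = 2 * k - 1),
        letter_at n j = LT <->
          (exists l k, 1 <= l <= (n - 1)./2 /\ 1 <= k <= 4 ^ (n - 2 * l - 1) /\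
                       j = 4 ^ (2 * l - 1) * (2 * k - 1)),
        letter_at n j = LV <->
          (exists l k, 1 <= l <= (n - 2)./2 /\ 1 <= k <= 4 ^ (n - 2 * l - 2) /\
                       j = 4 ^ (2 * l) * (2 * k - 1)),
        letter_at n j = LS <->
          ((exists l k, 1 <= l <= (n - 1)./2 /\ 1 <= k <= 4 ^ (n - 2 * l - 1) /\
                        j = 4 ^ (2 * l - 2) * (8 * k - 6)) \/
           (exists l k, 1 <= l <= (n - 2)./2 /\ 1 <= k <= 4 ^ (n - 2 * l - 2) /\
                        j = 4 ^ (2 * l - 1) * (8 * k - 2)))
      & letter_at n j = LU <->
          ((exists l k, 1 <= l <= (n - 1)./2 /\ 1 <= k <= 4 ^ (n - 2 * l - 1) /\
                        j = 4 ^ (2 * l - 2) * (8 * k - 2)) \/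
           (exists l k, 1 <= l <= (n - 2)./2 /\ 1 <= k <= 4 ^ (n - 2 * l - 2) /\
                        j = 4 ^ (2 * l - 1) * (8 * k - 6)))]) /\
  (forall m, n = 2 * m ->
    [/\ count_mem LP (K n) = 4 ^ (2 * m - 2),
        15 * count_mem LV (K n) = 4 ^ (2 * m - 2) - 1,
        15 * count_mem LT (K n) = 4 ^ (2 * m - 1) - 4,
        3 * count_mem LS (K n) = 4 ^ (2 * m - 2) - 1
      & 3 * count_mem LU (K n) = 4 ^ (2 * m - 2) - 1]) /\
  (forall m, n = 2 * m + 1 ->
    [/\ count_mem LP (K n) = 4 ^ (2 * m - 1),
        15 * count_mem LV (K n) = 4 ^ (2 * m - 1) - 4,
        15 * count_mem LT (K n) = 4 ^ (2 * m) - 1,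
        3 * count_mem LS (K n) = 4 ^ (2 * m - 1) - 1
      & 3 * count_mem LU (K n) = 4 ^ (2 * m - 1) - 1]).
Proof.
case: n hn => [|[|p]] // _.
have size_p : size (K p.+2) = 2 * 4 ^ (p.+2 - 2) - 1.
  by have := size_K p; rewrite !subSS subn0 expn2_double expn1; lia.
split; first exact: size_p.
split.
  move=> j /andP[j_gt0 j_le].
  have [v [o [o_odd j_eq]]] := pow2_odd_exists j_gt0; subst j.
  have j_lt : 2 ^ v * o < 2 ^ (2 * (p.+2 - 2) + 1) by rewrite expn2_double expn1; lia.
  rewrite letter_at_K ?size_p ?j_gt0 //.
  split; [exact: Kletter_LP_positions | exact: Kletter_LT_positions
         | exact: Kletter_LV_positions | exact: Kletter_LS_positions
         | exact: Kletter_LU_positions].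
have [cP cS cU cV cT] := count_K p.
split=> m n_eq.
  have [-> ->] : 2 * m - 2 = p /\ 2 * m - 1 = p.+1 by lia.
  have p_even : odd p = false by lia.
  by rewrite p_even in cV cT; rewrite expnS; split; lia.
have [-> ->] : 2 * m - 1 = p /\ 2 * m = p.+1 by lia.
have p_odd : odd p = true by lia.
by rewrite p_odd in cV cT; rewrite expnS; split; lia.
Qed.
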